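(* Let $d\ge 1$, $T\ge 1$, let $\mathcal{X}\subseteq\mathbb{R}^d$ be a non-empty closed convex set, and let $0<\mu\le L$. Let $f_1,\dots,f_T:\mathcal{X}\to[0,\infty)$ be differentiable with $\frac{\mu}{2}\|y-x\|^2\le f_t(y)-f_t(x)-\langle\nabla f_t(x),y-x\rangle\le\frac{L}{2}\|y-x\|^2$ for all $t$ and $x,y\in\mathcal{X}$. Let $x_1,\dots,x_T$ be the iterates of the OMGD algorithm with $K=\lceil\frac{L+\mu}{2\mu}\ln4\rceil$ from a starting point $x_0\in\mathcal{X}$. Then for any $\alpha>0$, $$\sum_{t=1}^T f_t(x_t)\le\sum_{t=1}^T f_t(x_t^\star)+\frac{1}{2\alpha}\sum_{t=1}^T\|\nabla f_t(x_t^\star)\|^2+(L+\alpha)\big(\|x_1-x_1^\star\|^2+2\mathcal{P}_{2,T}^\star\big).$$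
   Context: $x_t^\star=\arg\min_{x\in\mathcal{X}}f_t(x)$ and $\mathcal{P}_{2,T}^\star=\sum_{t=2}^T\|x_t^\star-x_{t-1}^\star\|^2$. OMGD with parameter $K$: $x_1=x_0$; for $t=2,\dots,T$, $z_t^{(0)}=x_{t-1}$, $z_t^{(k)}=\Pi_{\mathcal{X}}\big(z_t^{(k-1)}-\frac1L\nabla f_{t-1}(z_t^{(k-1)})\big)$ ($k=1,\dots,K$), $x_t=z_t^{(K)}$, where $\Pi_{\mathcal{X}}$ is Euclidean projection onto $\mathcal{X}$. *)

From HB Require Import structures.
From mathcomp Require Import all_boot all_order all_algebra.
From mathcomp Require Import all_classical all_reals all_analysis.
Set Implicit Arguments. Unset Strict Implicit. Unset Printing Implicit Defensive.
Import Order.TTheory GRing.Theory Num.Theory.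
Import numFieldNormedType.Exports.
Local Open Scope classical_set_scope.
Local Open Scope ring_scope.

Definition dotp (R : realType) (d : nat) (u v : 'rV[R]_d) : R :=
  \sum_(i < d) u ord0 i * v ord0 i.
Definition sqnorm (R : realType) (d : nat) (u : 'rV[R]_d) : R := dotp u u.

Definition is_gradient (R : realType) (d : nat) (f : 'rV[R]_d -> R)
  (x g : 'rV[R]_d) : Prop :=
  differentiable f x /\ forall h, 'd f x h = dotp g h.

Definition is_proj (R : realType) (d : nat) (X : set 'rV[R]_d)
  (p : 'rV[R]_d -> 'rV[R]_d) : Prop :=
  forall y, X (p y) /\ forall z, X z -> sqnorm (y - p y) <= sqnorm (y - z).

Definition is_argmin (R : realType) (d : nat) (X : set 'rV[R]_d)
  (f : 'rV[R]_d -> R) (x : 'rV[R]_d) : Prop :=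
  X x /\ forall y, X y -> f x <= f y.

(* OMGD iterates, indexed by t : nat; omgd ... 1 = x_1 = x0, and for t >= 2,
   x_t = z_t^(K) with z_t^(k) = proj (z_t^(k-1) - (1/L) grad f_{t-1} (z_t^(k-1))).
   (omgd ... 0 is set to x0 as well; it is never used.)
   grad s z is the gradient of f_s at z. *)
Fixpoint omgd (R : realType) (d : nat) (proj : 'rV[R]_d -> 'rV[R]_d)
  (grad : nat -> 'rV[R]_d -> 'rV[R]_d) (L : R) (K : nat) (x0 : 'rV[R]_d)
  (t : nat) : 'rV[R]_d :=
  match t with
  | 0 => x0
  | 1 => x0
  | (s.+1) as t' =>
      iter K (fun z => proj (z - L^-1 *: grad s z)) (omgd proj grad L K x0 s)
  end.

From HB Require Import structures.
From mathcomp Require Import all_boot all_order all_algebra.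
From mathcomp Require Import all_classical all_reals all_analysis.
From mathcomp Require Import ring lra.
Import Order.TTheory GRing.Theory Num.Theory.
Import numFieldNormedType.Exports.
Local Open Scope classical_set_scope.
Local Open Scope ring_scope.
Set Implicit Arguments. Unset Strict Implicit.

(* With [c := (L - mu) / (L + mu)], one projected gradient step on a
   mu-strongly convex, L-smooth function shrinks the squared distance to its
   minimiser by the factor [c].  Since [c^K <= exp (- K (1 - c))] and
   [K (1 - c) >= ln 4], the [K] steps OMGD spends on [f_(t-1)] bring [x_t]
   within a quarter of the squared distance from [x_(t-1)] to [x*_(t-1)].
   The triangle inequality turns this into
   [|x_t - x*_t|^2 <= |x_(t-1) - x*_(t-1)|^2 / 2 + 2 |x*_t - x*_(t-1)|^2],
   whose sum over [t] bounds the total squared tracking error.  Per round,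
   smoothness at [x*_t] and Young's inequality give
   [f_t(x_t) <= f_t(x*_t) + |grad f_t(x*_t)|^2 / (2 alpha)
                + (L + alpha) / 2 * |x_t - x*_t|^2].
   Only the two quadratic bounds, convexity of [X] and the projection
   property are used. *)

Section InnerProduct.
Variables (R : realType) (d : nat).
Implicit Types (u v w : 'rV[R]_d).

Lemma dotpC u v : dotp u v = dotp v u.
Proof. by apply: eq_bigr => i _; rewrite mulrC. Qed.

Lemma dotpDl u v w : dotp (u + v) w = dotp u w + dotp v w.
Proof. by rewrite /dotp -big_split; apply: eq_bigr => i _; rewrite mxE mulrDl. Qed.

Lemma dotpNl u v : dotp (- u) v = - dotp u v.
Proof. by rewrite /dotp -sumrN; apply: eq_bigr => i _; rewrite mxE mulNr. Qed.

Lemma dotpZl a u v : dotp (a *: u) v = a * dotp u v.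
Proof. by rewrite /dotp mulr_sumr; apply: eq_bigr => i _; rewrite mxE mulrA. Qed.

Lemma dotpBl u v w : dotp (u - v) w = dotp u w - dotp v w.
Proof. by rewrite dotpDl dotpNl. Qed.

Lemma dotpDr u v w : dotp u (v + w) = dotp u v + dotp u w.
Proof. by rewrite dotpC dotpDl !(dotpC u). Qed.

Lemma dotpNr u v : dotp u (- v) = - dotp u v.
Proof. by rewrite dotpC dotpNl dotpC. Qed.

Lemma dotpZr a u v : dotp u (a *: v) = a * dotp u v.
Proof. by rewrite dotpC dotpZl dotpC. Qed.

Lemma dotpBr u v w : dotp u (v - w) = dotp u v - dotp u w.
Proof. by rewrite dotpDr dotpNr. Qed.

Lemma sqnorm_ge0 u : 0 <= sqnorm u.
Proof. by apply: sumr_ge0 => i _; rewrite -expr2 sqr_ge0. Qed.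

Lemma sqnormN u : sqnorm (- u) = sqnorm u.
Proof. by rewrite /sqnorm dotpNl dotpNr opprK. Qed.

Lemma sqnormZ a u : sqnorm (a *: u) = a ^+ 2 * sqnorm u.
Proof. by rewrite /sqnorm dotpZl dotpZr mulrA. Qed.

Lemma sqnormB u v : sqnorm (u - v) = sqnorm u - 2 * dotp u v + sqnorm v.
Proof. rewrite /sqnorm dotpBl !dotpBr (dotpC v u); lra. Qed.

Lemma sqnormD u v : sqnorm (u + v) = sqnorm u + 2 * dotp u v + sqnorm v.
Proof. rewrite /sqnorm dotpDl !dotpDr (dotpC v u); lra. Qed.

Lemma sqnormD_le u v : sqnorm (u + v) <= 2 * sqnorm u + 2 * sqnorm v.
Proof. have := sqnorm_ge0 (u - v); rewrite sqnormB sqnormD; lra. Qed.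

Lemma dotp_le_young (a : R) u v : 0 < a ->
  dotp u v <= (2 * a)^-1 * sqnorm u + a / 2 * sqnorm v.
Proof.
move=> a_gt0; have := sqnorm_ge0 (u - a *: v).
rewrite sqnormB dotpZr sqnormZ => h.
have -> : (2 * a)^-1 * sqnorm u + a / 2 * sqnorm v = dotp u v
    + (2 * a)^-1 * (sqnorm u - 2 * (a * dotp u v) + a ^+ 2 * sqnorm v).
  by field; rewrite gt_eqF.
by rewrite lerDl mulr_ge0 // invr_ge0 mulr_ge0 // ltW.
Qed.

End InnerProduct.

Section ConvexOptimization.
Variables (R : realType) (d : nat).
Implicit Types (X : set 'rV[R]_d) (u w y z : 'rV[R]_d).

Definition strongly_convex_on X (mu : R) (f : 'rV[R]_d -> R)
    (g : 'rV[R]_d -> 'rV[R]_d) :=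
  forall u w, X u -> X w -> mu / 2 * sqnorm (w - u) <= f w - f u - dotp (g u) (w - u).

Definition smooth_on X (L : R) (f : 'rV[R]_d -> R) (g : 'rV[R]_d -> 'rV[R]_d) :=
  forall u w, X u -> X w -> f w - f u - dotp (g u) (w - u) <= L / 2 * sqnorm (w - u).

Definition pgd_step (proj : 'rV[R]_d -> 'rV[R]_d) (g : 'rV[R]_d -> 'rV[R]_d)
    (L : R) z :=
  proj (z - L^-1 *: g z).

Lemma smooth_le_young X (L alpha : R) f g xs y : 0 < alpha ->
  smooth_on X L f g -> X xs -> X y ->
  f y <= f xs + (2 * alpha)^-1 * sqnorm (g xs) + (L + alpha) / 2 * sqnorm (y - xs).
Proof.
move=> alpha_gt0 smooth Xxs Xy.
have := smooth _ _ Xxs Xy; have := dotp_le_young (g xs) (y - xs) alpha_gt0.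
lra.
Qed.

Lemma convex_set_comb X u w (s : R) : convex_set X -> X u -> X w ->
  0 <= s -> s <= 1 -> X (s *: u + (1 - s) *: w).
Proof. by move=> cX Xu Xw s0 s1; have := cX u w (Itv01 s0 s1); rewrite !inE; apply. Qed.

Lemma is_proj_obtuse X proj y z : convex_set X -> is_proj X proj -> X z ->
  dotp (y - proj y) (z - proj y) <= 0.
Proof.
move=> cX hP Xz; have [Xq q_min] := hP y.
set q := proj y in Xq q_min *.
set a := dotp (y - q) (z - q); set b := sqnorm (z - q).
have b_ge0 : 0 <= b by apply: sqnorm_ge0.
rewrite leNgt; apply/negP => a_gt0.
have ab_gt0 : 0 < a + b by rewrite ltr_wpDr.
(* moving [q] towards [z] by the step [s] lowers the distance to [y] *)
set s := a / (a + b).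
have s_ge0 : 0 <= s by rewrite divr_ge0 ?ltW.
have s_le1 : s <= 1 by rewrite ler_pdivrMr // mul1r lerDl.
have := q_min _ (convex_set_comb cX Xz Xq s_ge0 s_le1).
have -> : y - (s *: z + (1 - s) *: q) = (y - q) - s *: (z - q).
  by apply/matrixP => i j; rewrite !mxE; ring.
rewrite [sqnorm (_ - s *: _)]sqnormB dotpZr sqnormZ -/a -/b.
have hs : s * (a + b) = a by rewrite mulfVK // gt_eqF.
nra.
Qed.

Lemma argmin_dotp_ge0 X (L : R) f g xs w : convex_set X -> 0 <= L ->
  smooth_on X L f g -> is_argmin X f xs -> X w -> 0 <= dotp (g xs) (w - xs).
Proof.
move=> cX L_ge0 smooth [Xxs xs_min] Xw.
set a := dotp (g xs) (w - xs); set b := sqnorm (w - xs).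
have b_ge0 : 0 <= b by apply: sqnorm_ge0.
rewrite leNgt; apply/negP => a_lt0.
have den_gt0 : 0 < - a + L * b by rewrite ltr_wpDr ?mulr_ge0 // oppr_gt0.
(* a small step from [xs] towards [w] would decrease [f] below its minimum *)
set s := - a / (- a + L * b).
have s_gt0 : 0 < s by rewrite divr_gt0 // oppr_gt0.
have s_le1 : s <= 1 by rewrite ler_pdivrMr // mul1r lerDl mulr_ge0.
have Xy := convex_set_comb cX Xw Xxs (ltW s_gt0) s_le1.
have := smooth _ _ Xxs Xy; have := xs_min _ Xy.
have -> : s *: w + (1 - s) *: xs - xs = s *: (w - xs).
  by apply/matrixP => i j; rewrite !mxE; ring.
rewrite dotpZr sqnormZ -/a -/b.
have hs : s * (- a + L * b) = - a by rewrite mulfVK // gt_eqF.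
nra.
Qed.

Lemma pgd_step_contract X mu L f g proj xs z : convex_set X ->
  0 < mu -> mu <= L -> is_proj X proj ->
  strongly_convex_on X mu f g -> smooth_on X L f g -> is_argmin X f xs -> X z ->
  (L + mu) * sqnorm (pgd_step proj g L z - xs) <= (L - mu) * sqnorm (z - xs).
Proof.
move=> cX mu_gt0 mu_le_L hP sconv smooth hxs Xz.
have L_gt0 : 0 < L by apply: lt_le_trans mu_le_L.
have Xxs := hxs.1.
set zp := pgd_step proj g L z.
have Xzp : X zp by have [] := hP (z - L^-1 *: g z).
have first_order := argmin_dotp_ge0 cX (ltW L_gt0) smooth hxs Xzp.
have sc_z := sconv _ _ Xz Xxs.
have sc_xs := sconv _ _ Xxs Xzp.
have sm_z := smooth _ _ Xz Xzp.
have obtuse := is_proj_obtuse (z - L^-1 *: g z) cX hP Xxs.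
rewrite -/zp in obtuse.
set u := z - xs in sc_z sm_z obtuse *; set p := zp - xs in first_order sc_xs sm_z obtuse *.
have xs_z : xs - z = - u by rewrite opprB.
have zp_z : zp - z = p - u by rewrite opprB addrA subrK.
have xs_zp : xs - zp = - p by rewrite opprB.
have y_zp : z - L^-1 *: g z - zp = (u - p) - L^-1 *: g z.
  by apply/matrixP => i j; rewrite !mxE; ring.
rewrite xs_z in sc_z; rewrite zp_z in sm_z; rewrite xs_zp y_zp in obtuse.
have proj_bound : dotp (g z) p <= L * dotp u p - L * sqnorm p.
  move: obtuse; rewrite dotpNr dotpBl dotpZl dotpBl (dotpC (g z)) -mulrBr.
  rewrite oppr_le0 subr_ge0 -(ler_pM2l L_gt0) mulrA mulfV ?gt_eqF // mul1r.
  by rewrite mulrBr.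
rewrite sqnormN dotpNr in sc_z; rewrite dotpBr sqnormB (dotpC p u) in sm_z.
lra.
Qed.

End ConvexOptimization.

Section ContractionRate.
Variables (R : realType) (d : nat).
Implicit Types (X : set 'rV[R]_d) (y : 'rV[R]_d).

Lemma pgd_iter_in X proj g (L : R) k y : is_proj X proj -> X y ->
  X (iter k (pgd_step proj g L) y).
Proof. by move=> hP Xy; case: k => [|k] //=; apply: (hP _).1. Qed.

Lemma pgd_iter_contract X mu L f g proj xs k y : convex_set X ->
  0 < mu -> mu <= L -> is_proj X proj ->
  strongly_convex_on X mu f g -> smooth_on X L f g -> is_argmin X f xs -> X y ->
  sqnorm (iter k (pgd_step proj g L) y - xs)
    <= ((L - mu) / (L + mu)) ^+ k * sqnorm (y - xs).
Proof.
move=> cX mu_gt0 mu_le_L hP sconv smooth hxs Xy.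
have Lmu_gt0 : 0 < L + mu by rewrite addr_gt0 // (lt_le_trans mu_gt0).
have c_ge0 : 0 <= (L - mu) / (L + mu) by rewrite divr_ge0 ?subr_ge0 // ltW.
elim: k => [|k IH]; first by rewrite expr0 mul1r.
have Xk : X (iter k (pgd_step proj g L) y) by apply: pgd_iter_in.
rewrite iterS exprS -mulrA.
apply: le_trans (_ : _ <= (L - mu) / (L + mu) * sqnorm (iter k (pgd_step proj g L) y - xs)) _.
  rewrite mulrAC ler_pdivlMr // mulrC.
  exact: (pgd_step_contract cX mu_gt0 mu_le_L hP sconv smooth hxs Xk).
by rewrite ler_wpM2l.
Qed.

Lemma exprn_le_expR (c : R) n : 0 <= c -> c ^+ n <= expR (- (n%:R * (1 - c))).
Proof.
move=> c_ge0; rewrite -mulrN opprB expRM_natl lerXn2r ?nnegrE ?expR_ge0 //.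
by have := expR_ge1Dx (c - 1); rewrite addrC subrK.
Qed.

Lemma contraction_pow_ceil_le (mu L : R) : 0 < mu -> mu <= L ->
  ((L - mu) / (L + mu)) ^+ `|Num.ceil ((L + mu) / (2 * mu) * ln 4)|%N <= 4^-1.
Proof.
move=> mu_gt0 mu_le_L.
have Lmu_gt0 : 0 < L + mu by rewrite addr_gt0 // (lt_le_trans mu_gt0).
set r := (L + mu) / (2 * mu) * ln 4; set K := `|Num.ceil r|%N.
have ln4_gt0 : 0 < ln (4 : R) by rewrite ln_gt0 // ltr1n.
have r_gt0 : 0 < r by rewrite mulr_gt0 // divr_gt0 // mulr_gt0.
have r_le_K : r <= K%:R.
  by rewrite natr_absz ger0_norm ?ceil_ge // ceil_ge0 (lt_trans _ r_gt0) ?ltrN10.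
have one_minus_c : 1 - (L - mu) / (L + mu) = 2 * mu / (L + mu).
  by field; rewrite gt_eqF.
have ln4_le : ln 4 <= K%:R * (1 - (L - mu) / (L + mu)).
  have -> : ln (4 : R) = r * (2 * mu / (L + mu)).
    by rewrite /r; field; rewrite !gt_eqF // mulr_gt0.
  by rewrite one_minus_c ler_wpM2r // ltW // divr_gt0 // mulr_gt0.
apply: le_trans (exprn_le_expR _ _) _; first by rewrite divr_ge0 ?subr_ge0 // ltW.
apply: le_trans (_ : expR (- ln 4) <= _); first by rewrite ler_expR lerN2.
by rewrite expRN lnK // posrE.
Qed.

End ContractionRate.

Lemma sum_le_of_halving (R : realFieldType) (a b : nat -> R) (T : nat) :
  (1 <= T)%N -> 0 <= a T ->
  (forall t, (2 <= t <= T)%N -> a t <= 2^-1 * a t.-1 + b t) ->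
  \sum_(1 <= t < T.+1) a t <= 2 * a 1%N + 2 * \sum_(2 <= t < T.+1) b t.
Proof.
move=> T_ge1 aT_ge0 halving.
have tail : \sum_(2 <= t < T.+1) a t <= 2^-1 * \sum_(1 <= t < T) a t + \sum_(2 <= t < T.+1) b t.
  have -> : \sum_(1 <= t < T) a t = \sum_(2 <= t < T.+1) a t.-1 by rewrite [RHS]big_add1.
  rewrite mulr_sumr -big_split /=.
  by apply: ler_sum_nat => t; rewrite ltnS; apply: halving.
have head : \sum_(1 <= t < T) a t <= a 1%N + \sum_(2 <= t < T.+1) a t.
  by rewrite -big_ltn // [leRHS]big_nat_recr //= lerDl.
rewrite big_ltn //.
lra.
Qed.

Section OMGD.
Variables (R : realType) (d T : nat) (X : set 'rV[R]_d) (mu L : R).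
Variables (f : nat -> 'rV[R]_d -> R) (grad : nat -> 'rV[R]_d -> 'rV[R]_d).
Variables (proj : 'rV[R]_d -> 'rV[R]_d) (xstar : nat -> 'rV[R]_d) (x0 : 'rV[R]_d).
Variable K : nat.
Hypotheses (cX : convex_set X) (mu_gt0 : 0 < mu) (mu_le_L : mu <= L).
Hypotheses (hP : is_proj X proj) (Xx0 : X x0).
Hypothesis sconv : forall t, (1 <= t <= T)%N -> strongly_convex_on X mu (f t) (grad t).
Hypothesis smooth : forall t, (1 <= t <= T)%N -> smooth_on X L (f t) (grad t).
Hypothesis xstar_min : forall t, (1 <= t <= T)%N -> is_argmin X (f t) (xstar t).
Hypothesis rate_K : ((L - mu) / (L + mu)) ^+ K <= 4^-1.

Local Notation x := (omgd proj grad L K x0).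

Lemma omgdSS t : x t.+2 = iter K (pgd_step proj (grad t.+1) L) (x t.+1).
Proof. by []. Qed.

Lemma omgd_in t : X (x t).
Proof. by elim: t => [|[|t] IH] //; rewrite omgdSS; apply: pgd_iter_in. Qed.

Lemma omgd_track t : (2 <= t <= T)%N ->
  sqnorm (x t - xstar t.-1) <= 4^-1 * sqnorm (x t.-1 - xstar t.-1).
Proof.
case: t => [|[|t]] // /andP[_ tT].
have ht : (1 <= t.+1 <= T)%N by rewrite /= ltnW.
rewrite omgdSS /=.
apply: le_trans (pgd_iter_contract K cX mu_gt0 mu_le_L hP (sconv ht) (smooth ht)
  (xstar_min ht) (omgd_in t.+1)) _.
by rewrite ler_wpM2r ?sqnorm_ge0.
Qed.

Lemma omgd_dist_halving t : (2 <= t <= T)%N ->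
  sqnorm (x t - xstar t) <=
    2^-1 * sqnorm (x t.-1 - xstar t.-1) + 2 * sqnorm (xstar t - xstar t.-1).
Proof.
move=> ht; have track := omgd_track ht.
have -> : x t - xstar t = (x t - xstar t.-1) + (xstar t.-1 - xstar t).
  by rewrite addrA subrK.
apply: le_trans (sqnormD_le _ _) _.
rewrite -[sqnorm (xstar t.-1 - xstar t)]sqnormN opprB.
lra.
Qed.

Lemma omgd_dist_sum : (1 <= T)%N ->
  \sum_(1 <= t < T.+1) sqnorm (x t - xstar t) <=
    2 * sqnorm (x 1%N - xstar 1%N) + 4 * \sum_(2 <= t < T.+1) sqnorm (xstar t - xstar t.-1).
Proof.
move=> T_ge1.
apply: le_trans (sum_le_of_halving T_ge1 (sqnorm_ge0 _) omgd_dist_halving) _.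
rewrite -mulr_sumr mulrA; lra.
Qed.

End OMGD.

Theorem lemma2 (R : realType) (d T : nat) (X : set 'rV[R]_d) (mu L : R)
  (f : nat -> 'rV[R]_d -> R) (grad : nat -> 'rV[R]_d -> 'rV[R]_d)
  (proj : 'rV[R]_d -> 'rV[R]_d) (xstar : nat -> 'rV[R]_d) (x0 : 'rV[R]_d)
  (K : nat) :
  (1 <= d)%N -> (1 <= T)%N ->
  X !=set0 -> closed X -> convex_set X ->
  0 < mu -> mu <= L ->
  (forall t, (1 <= t <= T)%N -> forall x, X x -> 0 <= f t x) ->
  (forall t, (1 <= t <= T)%N -> forall x, X x -> is_gradient (f t) x (grad t x)) ->
  (forall t, (1 <= t <= T)%N -> forall x y, X x -> X y ->
     mu / 2 * sqnorm (y - x) <= f t y - f t x - dotp (grad t x) (y - x) /\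
     f t y - f t x - dotp (grad t x) (y - x) <= L / 2 * sqnorm (y - x)) ->
  (forall t, (1 <= t <= T)%N -> is_argmin X (f t) (xstar t)) ->
  is_proj X proj ->
  X x0 ->
  K = `|Num.ceil ((L + mu) / (2 * mu) * ln 4)|%N ->
  forall alpha : R, 0 < alpha ->
  let x := omgd proj grad L K x0 in
  \sum_(1 <= t < T.+1) f t (x t) <=
    \sum_(1 <= t < T.+1) f t (xstar t)
    + (2 * alpha)^-1 * \sum_(1 <= t < T.+1) sqnorm (grad t (xstar t))
    + (L + alpha) * (sqnorm (x 1%N - xstar 1%N)
        + 2 * \sum_(2 <= t < T.+1) sqnorm (xstar t - xstar t.-1)).
Proof.
move=> _ T_ge1 _ _ cX mu_gt0 mu_le_L _ _ bounds xstar_min hP Xx0 -> alpha alpha_gt0.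
cbv zeta; set x := omgd proj grad L _ x0.
have sconv t (ht : (1 <= t <= T)%N) : strongly_convex_on X mu (f t) (grad t).
  by move=> u w Xu Xw; have [] := bounds t ht u w Xu Xw.
have smooth t (ht : (1 <= t <= T)%N) : smooth_on X L (f t) (grad t).
  by move=> u w Xu Xw; have [] := bounds t ht u w Xu Xw.
have dist_sum := omgd_dist_sum cX mu_gt0 mu_le_L hP Xx0 sconv smooth xstar_min
  (contraction_pow_ceil_le mu_gt0 mu_le_L) T_ge1.
have per_round : \sum_(1 <= t < T.+1) f t (x t) <= \sum_(1 <= t < T.+1)
    (f t (xstar t) + (2 * alpha)^-1 * sqnorm (grad t (xstar t))
     + (L + alpha) / 2 * sqnorm (x t - xstar t)).
  apply: ler_sum_nat => t; rewrite ltnS => ht.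
  exact: smooth_le_young alpha_gt0 (smooth t ht) (xstar_min t ht).1
    (omgd_in L grad _ hP Xx0 t).
rewrite !big_split /= -!mulr_sumr in per_round.
apply: le_trans per_round _.
have Lalpha_ge0 : 0 <= (L + alpha) / 2.
  by rewrite divr_ge0 // addr_ge0 ?ltW // (lt_le_trans mu_gt0).
have := ler_wpM2l Lalpha_ge0 dist_sum.
lra.
Qed.
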